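(* Let $m_1,m_2\ge3$ be coprime integers, let $n\ge1$ be divisible by $m_1$, and let $Q\in C(n,m_1,m_2)$. 1) If $Ch_1(Q)\ne0$, then $Ch_2(Q)=0$. 2) If $Ch_1(Q)\ne0$ and $Ch_3(Q)\ne0$, then $m_1=3$ and $Ch_4(Q)=0$. 3) If $Ch_1(Q)\ne0$, $Ch_3(Q)\ne0$ and $Ch_5(Q)\ne0$, then $m_1=3$ and $m_2=4$.
   Context: $T_k$ denotes the Chebyshev polynomial of the first kind of degree $k$, $T_k(\cos\phi)=\cos(k\phi)$. Every real polynomial $Q$ of degree $n$ can be uniquely written as $Q=\sum_{k=0}^n d_kT_k$ with $d_k\in\mathbb{R}$; set $Ch_i(Q)=d_{n-i}$ for $0\le i\le n$. $C(n,m_1,m_2)$ denotes the set of real polynomials $Q=\sum_{k=0}^n d_kT_k$ with $d_n\ne0$ and such that $d_k=0$ unless $k$ is divisible by $m_1$ or by $m_2$. *)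

From HB Require Import structures.
From mathcomp Require Import all_boot all_order all_algebra.
From Stdlib Require Import ClassicalEpsilon.
Set Implicit Arguments. Unset Strict Implicit. Unset Printing Implicit Defensive.
Import Order.TTheory GRing.Theory Num.Theory.
Local Open Scope ring_scope.

Section Cheb.
Variable R : realFieldType.

Fixpoint cheb_pair (k : nat) : {poly R} * {poly R} :=
  match k with
  | 0%N => (1, 'X)
  | k'.+1 => let: (a, b) := cheb_pair k' in (b, 2%:P * 'X * b - a)
  end.

(* Chebyshev polynomial of the first kind T_k:
   T_0 = 1, T_1 = X, T_{k+2} = 2 X T_{k+1} - T_k. *)
Definition cheb (k : nat) : {poly R} := (cheb_pair k).1.

Definition cheb_rep (n : nat) (Q : {poly R}) (d : nat -> R) : Prop :=
  Q = \sum_(k < n.+1) d k *: cheb k.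

Definition cheb_coefs (Q : {poly R}) : nat -> R :=
  epsilon (inhabits (fun _ => 0)) (fun d => cheb_rep (size Q).-1 Q d).

Definition Ch (i : nat) (Q : {poly R}) : R :=
  if (i <= (size Q).-1)%N then cheb_coefs Q ((size Q).-1 - i)%N else 0.

Definition inC (n m1 m2 : nat) (Q : {poly R}) : Prop :=
  exists d : nat -> R, [/\ cheb_rep n Q d, d n != 0 &
    forall k, (k <= n)%N -> d k != 0 -> ((m1 %| k)%N || (m2 %| k)%N)].
End Cheb.

(** The Chebyshev expansion of a polynomial of degree n is unique, so Ch_i(Q)
    is the coefficient d_(n-i) of any expansion of Q, and Ch_i(Q) != 0 forces
    m1 %| n - i or m2 %| n - i, i.e. m1 %| i or m2 %| n - i since m1 %| n.
    As m1 >= 3 never divides 1, Ch_1(Q) != 0 gives m2 %| n - 1; any further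
    nonzero Ch_i(Q) with m1 not dividing i then gives m2 %| i - 1.  For
    i = 2, 3, 4, 5 these divisibilities pin down m1 and m2 as claimed. *)

From HB Require Import structures.
From mathcomp Require Import all_boot all_order all_algebra.
From mathcomp Require Import zify.
From Stdlib Require Import ClassicalEpsilon.
Set Implicit Arguments.
Unset Strict Implicit.
Unset Printing Implicit Defensive.
Import Order.TTheory GRing.Theory Num.Theory.
Local Open Scope ring_scope.

Section ChebyshevBasis.
Variable R : realFieldType.

Lemma cheb_pairE k : cheb_pair R k = (cheb R k, cheb R k.+1).
Proof. by elim: k => [//|k IH]; rewrite /cheb /= IH. Qed.

Lemma chebSS k : cheb R k.+2 = 2%:P * 'X * cheb R k.+1 - cheb R k.
Proof. by rewrite {1}/cheb /= cheb_pairE. Qed.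

Lemma size_cheb k : size (cheb R k) = k.+1.
Proof.
elim/ltn_ind: k => -[|[|k]] IH; first by rewrite /cheb /= size_poly1.
  by rewrite /cheb /= size_polyX.
have size_XT : size (2%:P * 'X * cheb R k.+1) = k.+3.
  rewrite -mulrA size_Cmul ?pnatr_eq0 // mulrC size_mulX ?IH //.
  by rewrite -size_poly_eq0 IH.
by rewrite chebSS size_polyDl size_XT // size_polyN IH.
Qed.

Lemma coef_cheb_deg_neq0 k : (cheb R k)`_k != 0.
Proof.
have := lead_coef_eq0 (cheb R k); rewrite -size_poly_eq0 size_cheb lead_coefE.
by rewrite size_cheb => ->.
Qed.

Lemma coef_cheb_sum n (c : nat -> R) j :
  (\sum_(k < n.+1) c k *: cheb R k)`_j = \sum_(k < n.+1) c k * (cheb R k)`_j.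
Proof. by rewrite coef_sum; apply: eq_bigr => k _; rewrite coefZ. Qed.

Lemma coef_cheb_sum_deg n (c : nat -> R) :
  (\sum_(k < n.+1) c k *: cheb R k)`_n = c n * (cheb R n)`_n.
Proof.
rewrite coef_cheb_sum big_ord_recr /= big1 ?add0r // => k _.
by rewrite nth_default ?mulr0 // size_cheb.
Qed.

Lemma coef_cheb_sum_gt n (c : nat -> R) j : (n < j)%N ->
  (\sum_(k < n.+1) c k *: cheb R k)`_j = 0.
Proof.
move=> ltnj; rewrite coef_cheb_sum big1 // => k _.
by rewrite nth_default ?mulr0 // size_cheb (leq_trans (ltn_ord k)).
Qed.

Lemma size_cheb_sum n (c : nat -> R) : c n != 0 ->
  size (\sum_(k < n.+1) c k *: cheb R k) = n.+1.
Proof.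
move=> cn_neq0; apply/eqP; rewrite eqn_leq; apply/andP; split.
  by apply/leq_sizeP => j; apply: coef_cheb_sum_gt.
rewrite ltnNge; apply/leq_sizeP => /(_ n (leqnn n)) /eqP.
by rewrite coef_cheb_sum_deg mulf_eq0 (negPf cn_neq0) (negPf (coef_cheb_deg_neq0 _)).
Qed.

Lemma cheb_sum_eq0_deg n (c : nat -> R) :
  \sum_(k < n.+1) c k *: cheb R k = 0 -> c n = 0.
Proof.
move=> sum_eq0; have := coef_cheb_sum_deg n c; rewrite sum_eq0 coef0 => /esym/eqP.
by rewrite mulf_eq0 (negPf (coef_cheb_deg_neq0 _)) orbF => /eqP.
Qed.

Lemma cheb_sum_eq0 n (c : nat -> R) :
  \sum_(k < n.+1) c k *: cheb R k = 0 -> forall k, (k <= n)%N -> c k = 0.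
Proof.
elim: n => [|n IH] sum_eq0 k; first by rewrite leqn0 => /eqP ->; apply: cheb_sum_eq0_deg.
have cSn := cheb_sum_eq0_deg sum_eq0.
rewrite leq_eqVlt => /orP[/eqP -> //|ltkSn].
by apply: IH => //; move: sum_eq0; rewrite big_ord_recr /= cSn scale0r addr0.
Qed.

Lemma cheb_rep_uniq n (Q : {poly R}) (d e : nat -> R) :
  cheb_rep n Q d -> cheb_rep n Q e -> forall k, (k <= n)%N -> d k = e k.
Proof.
move=> Qd Qe k lekn; apply/eqP; rewrite -subr_eq0; apply/eqP.
apply: (@cheb_sum_eq0 n (fun k => d k - e k)) lekn.
under eq_bigr do rewrite scalerBl.
by rewrite sumrB -Qd -Qe subrr.
Qed.

Lemma Ch_cheb_rep n (Q : {poly R}) (d : nat -> R) :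
  cheb_rep n Q d -> d n != 0 ->
  forall i, Ch i Q = if (i <= n)%N then d (n - i)%N else 0.
Proof.
move=> Qd dn_neq0 i.
have sizeQ : size Q = n.+1 by rewrite Qd size_cheb_sum.
have Q_coefs : cheb_rep n Q (cheb_coefs Q).
  by rewrite -[n]/(n.+1.-1) -sizeQ; apply: epsilon_spec; exists d; rewrite sizeQ.
rewrite /Ch sizeQ /=; case: ifP => // _.
by apply: cheb_rep_uniq Q_coefs Qd _ _; apply: leq_subr.
Qed.

End ChebyshevBasis.

Lemma inC_Ch_neq0 (R : realFieldType) (m1 m2 n i : nat) (Q : {poly R}) :
  (m1 %| n)%N -> inC n m1 m2 Q -> Ch i Q != 0 ->
  (i <= n)%N && ((m1 %| i)%N || (m2 %| n - i)%N).
Proof.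
move=> m1n [d [Qd dn_neq0 d_support]].
rewrite (Ch_cheb_rep Qd dn_neq0); case: ifP => [lein d_neq0|]; last by rewrite eqxx.
by have := d_support _ (leq_subr i n) d_neq0; rewrite dvdn_subr.
Qed.

Lemma ndvdn_small m k : (3 <= m)%N -> (0 < k < 3)%N -> ~~ (m %| k)%N.
Proof. by move=> m_ge3 /andP[k_gt0 k_lt3]; apply/negP => /(dvdn_leq k_gt0); lia. Qed.

Section Offsets.
Variables m1 m2 n : nat.
Hypotheses (m1_ge3 : (3 <= m1)%N) (m2_ge3 : (3 <= m2)%N).

Definition offset_ok i := (i <= n)%N && ((m1 %| i)%N || (m2 %| n - i)%N).

Lemma offset_ok1 : offset_ok 1 -> (m2 %| n - 1)%N.
Proof. by case/andP=> _ /orP[/(negP (@ndvdn_small _ 1 m1_ge3 isT))|]. Qed.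

Lemma offset_ok_pred i : offset_ok 1 -> offset_ok i -> ~~ (m1 %| i)%N ->
  (m2 %| i.-1)%N.
Proof.
move=> /offset_ok1 m2_n1 /andP[lein /orP[-> //|m2_ni]] m1_i.
have i_gt0 : (0 < i)%N by case: i m1_i {lein m2_ni} => [|//]; rewrite dvdn0.
have Eni : (n - i = (n - 1) - i.-1)%N by lia.
by move: m2_ni; rewrite Eni dvdn_subr //; lia.
Qed.

Lemma offset_ok2 : offset_ok 1 -> ~~ offset_ok 2.
Proof.
move=> ok1; apply/negP => ok2.
by have := offset_ok_pred ok1 ok2 (@ndvdn_small _ 2 m1_ge3 isT); rewrite dvdn1; lia.
Qed.

Lemma offset_ok3 : offset_ok 1 -> offset_ok 3 -> m1 = 3%N.
Proof.
move=> ok1 ok3; have [m1_3|m1_n3] := boolP (m1 %| 3)%N.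
  by have := dvdn_leq (ltn0Sn 2) m1_3; lia.
by have := offset_ok_pred ok1 ok3 m1_n3; rewrite (negPf (@ndvdn_small _ 2 m2_ge3 isT)).
Qed.

Lemma offset_ok4 : coprime m1 m2 -> offset_ok 1 -> offset_ok 3 -> ~~ offset_ok 4.
Proof.
move=> co12 ok1 ok3; apply/negP => ok4; have m1_3 := offset_ok3 ok1 ok3.
have m2_3 : (m2 %| 3)%N by apply: offset_ok_pred ok4 _; rewrite // m1_3.
have m2_eq3 : m2 = 3%N by have := dvdn_leq (ltn0Sn 2) m2_3; lia.
by move: co12; rewrite m1_3 m2_eq3.
Qed.

Lemma offset_ok5 : offset_ok 1 -> offset_ok 3 -> offset_ok 5 -> m2 = 4%N.
Proof.
move=> ok1 ok3 ok5; have m1_3 := offset_ok3 ok1 ok3.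
have m2_4 : (m2 %| 4)%N by apply: offset_ok_pred ok5 _; rewrite // m1_3.
have m2_neq3 : m2 != 3%N by apply: contraTneq m2_4 => ->.
by have := dvdn_leq (ltn0Sn 3) m2_4; lia.
Qed.

End Offsets.

Theorem lemma3p3 (R : realFieldType) (m1 m2 n : nat) (Q : {poly R}) :
  (3 <= m1)%N -> (3 <= m2)%N -> coprime m1 m2 -> (1 <= n)%N -> (m1 %| n)%N ->
  inC n m1 m2 Q ->
  [/\ (Ch 1 Q != 0 -> Ch 2 Q = 0),
      (Ch 1 Q != 0 -> Ch 3 Q != 0 -> m1 = 3%N /\ Ch 4 Q = 0) &
      (Ch 1 Q != 0 -> Ch 3 Q != 0 -> Ch 5 Q != 0 -> m1 = 3%N /\ m2 = 4%N)].
Proof.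
move=> m1_ge3 m2_ge3 co12 _ m1n QC.
have ok i : Ch i Q != 0 -> offset_ok m1 m2 n i by apply: inC_Ch_neq0 m1n QC.
have Ch_eq0 i : ~~ offset_ok m1 m2 n i -> Ch i Q = 0.
  by move=> not_ok; apply: contraNeq not_ok; apply: ok.
split=> [/ok ok1 | /ok ok1 /ok ok3 | /ok ok1 /ok ok3 /ok ok5].
- exact/Ch_eq0/(offset_ok2 m1_ge3).
- by split; [apply: offset_ok3 ok3 | apply/Ch_eq0/offset_ok4].
- by split; [apply: offset_ok3 ok3 | apply: offset_ok5 ok5].
Qed.
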